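(* Suppose $X^*\in\operatorname{relint}\mathcal X$ (each $X_i^*$ positive definite) is consistently asymptotically stable under the flow $\Phi$. Then for every sufficiently small compact neighborhood $U$ of $X^*$ in $\operatorname{relint}\mathcal X$, $$\lim_{t\to\infty}\sup_{X\in U}\|\Phi_t(X)-X^*\|=0.$$
   Context: Quantum game with players $i\in\{1,\dots,N\}$; $\mathbb H^{d}$ is the real vector space of $d\times d$ complex Hermitian matrices; $\mathcal X_i=\{X_i\in\mathbb H^{d_i}:X_i\succeq0,\operatorname{tr}X_i=1\}$, $\mathcal X=\prod_i\mathcal X_i$, with any norm $\|\cdot\|$. Payoffs $u_i(X)=\sum_{\omega\in\Omega}U_i(\omega)\operatorname{tr}[P_\omega(X_1\otimes\cdots\otimes X_N)]$; payoff gradient $V_i(X)\in\mathbb H^{d_i}$ with $u_i(A;X_{-i})=\operatorname{tr}(AV_i(X))$. Regularizers $h_i(X_i)=\operatorname{tr}\theta_i(X_i)$ with $\theta_i:[0,1]\to\mathbb R$ continuous, twice differentiable on $(0,1]$, $\theta_i(0)=0$, $\inf_{(0,1]}\theta_i''>0$, and steep ($\lim_{x\to0^+}\theta_i'(x)=-\infty$). Mirror map $Q_i(Y_i)=\arg\max_{X_i\in\mathcal X_i}\{\operatorname{tr}(Y_iX_i)-h_i(X_i)\}$. FTQL dynamics $\dot Y_i=V_i(X)$, $X_i=Q_i(Y_i)$. Standing assumption: the dynamics induce a continuous flow $\Phi:\mathbb R_{\ge0}\times\mathcal X\to\mathcal X$ with $\Phi_t(Q(Y))=Q(Y(t))$ for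 each FTQL solution with $Y(0)=Y$ (and, outside the image of $Q$, given by the dynamics restricted to the relevant face of $\mathcal X$). $X^*$ is Lyapunov stable if for every neighborhood $U$ of $X^*$ in $\mathcal X$ there is a neighborhood $U'$ with $\Phi_t(U')\subseteq U$ for all $t\ge0$. Domain of consistency of $P\in\mathcal X$: $\mathcal X_P=\{X\in\mathcal X:\ker X_i\subseteq\ker P_i\ \forall i\}$. $P$ is consistently attracting if there is a neighborhood $U$ of $P$ with $\Phi_t(X)\to P$ for all $X\in U\cap\mathcal X_P$; consistently asymptotically stable if Lyapunov stable and consistently attracting. *)

From mathcomp Require Import all_boot all_order all_algebra.
From mathcomp Require Import sesquilinear spectral complex.
From mathcomp Require Import all_classical all_reals all_analysis.

Set Implicit Arguments.
Unset Strict Implicit.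
Unset Printing Implicit Defensive.

Import Order.TTheory GRing.Theory Num.Theory.
Local Open Scope classical_set_scope.
Local Open Scope ring_scope.

Definition cmod (R : realType) (z : complex R) : R :=
  Num.sqrt (complex.Re z ^+ 2 + complex.Im z ^+ 2).

Definition hermitian (R : realType) (n : nat) (A : 'M[complex R]_n) : Prop :=
  A \is hermsymmx.

Definition adjv (R : realType) (n : nat) (v : 'cV[complex R]_n) : 'rV[complex R]_n :=
  (map_mx Num.conj v)^T.

Definition psd (R : realType) (n : nat) (A : 'M[complex R]_n) : Prop :=
  hermitian A /\ forall v : 'cV[complex R]_n, 0 <= (adjv v *m A *m v) 0 0.

Definition pd (R : realType) (n : nat) (A : 'M[complex R]_n) : Prop :=
  hermitian A /\ forall v : 'cV[complex R]_n, v != 0 -> 0 < (adjv v *m A *m v) 0 0.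

Definition density (R : realType) (n : nat) (A : 'M[complex R]_n) : Prop :=
  psd A /\ \tr A = 1.

Definition profile (R : realType) (N : nat) (d : 'I_N -> nat) : Type :=
  forall i : 'I_N, 'M[complex R]_(d i).

Definition state_space (R : realType) (N : nat) (d : 'I_N -> nat)
  : set (profile R d) :=
  [set X | forall i, density (X i)].
Arguments state_space {R N} d _.

Definition relint_state (R : realType) (N : nat) (d : 'I_N -> nat)
  : set (profile R d) :=
  [set X | forall i, density (X i) /\ pd (X i)].
Arguments relint_state {R N} d _.

Definition pdist (R : realType) (N : nat) (d : 'I_N -> nat) (X Y : profile R d) : R :=
  \big[Num.max/0]_(i < N) \big[Num.max/0]_(a < d i) \big[Num.max/0]_(b < d i)
     cmod (X i a b - Y i a b).

Definition nbhs_in (R : realType) (N : nat) (d : 'I_N -> nat)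
  (X0 : profile R d) (U : set (profile R d)) : Prop :=
  U `<=` state_space d /\
  exists2 e : R, 0 < e &
    forall X, state_space d X -> pdist X X0 < e -> U X.

Definition seq_compact (R : realType) (N : nat) (d : 'I_N -> nat)
  (K : set (profile R d)) : Prop :=
  forall u : nat -> profile R d, (forall n, K (u n)) ->
    exists (phi : nat -> nat) (L : profile R d),
      {homo phi : m n / (m < n)%N >-> (m < n)%N} /\ K L /\
      forall e : R, 0 < e -> exists M : nat, forall n, (M <= n)%N ->
        pdist (u (phi n)) L < e.

(* index set of the tensor product space C^{d_1} (x) ... (x) C^{d_N} *)
Definition tens_index (N : nat) (d : 'I_N -> nat) : finType :=
  {dffun forall i : 'I_N, 'I_(d i)}.

Definition tens_op (R : realType) (N : nat) (d : 'I_N -> nat) : Type :=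
  tens_index d -> tens_index d -> complex R.

Definition tensor (R : realType) (N : nat) (d : 'I_N -> nat) (X : profile R d)
  : tens_op R d :=
  fun j k => \prod_(i < N) X i (j i) (k i).

Definition POVM (R : realType) (N : nat) (d : 'I_N -> nat) (Om : finType)
  (P : Om -> tens_op R d) : Prop :=
  (forall w j k, P w j k = Num.conj (P w k j)) /\
  (forall w (v : tens_index d -> complex R),
      0 <= \sum_(j : tens_index d) \sum_(k : tens_index d)
              Num.conj (v j) * P w j k * v k) /\
  (forall j k, \sum_(w : Om) P w j k = (j == k)%:R).

Definition payoff (R : realType) (N : nat) (d : 'I_N -> nat) (Om : finType)
  (U : 'I_N -> Om -> R) (P : Om -> tens_op R d) (i : 'I_N) (X : profile R d) : R :=
  complex.Re (\sum_(w : Om) (U i w)%:C%C *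
     \sum_(j : tens_index d) \sum_(k : tens_index d) P w j k * tensor X k j).

Definition payoff_gradient (R : realType) (N : nat) (d : 'I_N -> nat) (Om : finType)
  (U : 'I_N -> Om -> R) (P : Om -> tens_op R d) (V : profile R d -> profile R d)
  : Prop :=
  forall X, state_space d X -> forall i,
    hermitian (V X i) /\
    forall A : 'M[complex R]_(d i), hermitian A ->
      ((payoff U P i (dfwith X i A))%:C)%C = \tr (A *m V X i).

Definition regularizer_kernel (R : realType) (theta : R -> R) : Prop :=
  (forall x, 0 <= x <= 1 -> forall e : R, 0 < e ->
     exists2 del : R, 0 < del &
       forall y, 0 <= y <= 1 -> `|y - x| < del -> `|theta y - theta x| < e) /\
  (forall x, 0 < x < 1 -> derivable theta x 1 /\ derivable (derive1 theta) x 1) /\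
  theta 0 = 0 /\
  (exists2 c : R, 0 < c & forall x, 0 < x < 1 -> c <= derive1n 2 theta x) /\
  (derive1 theta x @[x --> (0:R)^'+] --> -oo)%classic.

(* h_i(X) = tr theta(X) = sum of theta over the eigenvalues of the Hermitian X *)
Definition htrace (R : realType) (n : nat) (theta : R -> R) (A : 'M[complex R]_n) : R :=
  \sum_(k < n) theta (complex.Re (spectral_diag A 0 k)).

Definition mirror (R : realType) (n : nat) (theta : R -> R)
  (Y X : 'M[complex R]_n) : Prop :=
  density X /\
  forall X' : 'M[complex R]_n, density X' ->
    complex.Re (\tr (Y *m X')) - htrace theta X' <=
    complex.Re (\tr (Y *m X)) - htrace theta X.

Definition ftql_solution (R : realType) (N : nat) (d : 'I_N -> nat)
  (V : profile R d -> profile R d) (theta : 'I_N -> R -> R)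
  (Y : R -> profile R d) : Prop :=
  (forall t, 0 <= t -> forall i, hermitian (Y t i)) /\
  forall t, 0 <= t -> forall X : profile R d,
    (forall i, mirror (theta i) (Y t i) (X i)) ->
    forall i a b,
      is_derive t 1 (fun s => complex.Re (Y s i a b)) (complex.Re (V X i a b)) /\
      is_derive t 1 (fun s => complex.Im (Y s i a b)) (complex.Im (V X i a b)).

Definition ftql_flow (R : realType) (N : nat) (d : 'I_N -> nat)
  (V : profile R d -> profile R d) (theta : 'I_N -> R -> R)
  (Phi : R -> profile R d -> profile R d) : Prop :=
  (forall t X, 0 <= t -> state_space d X -> state_space d (Phi t X)) /\
  (forall X, state_space d X -> Phi 0 X = X) /\
  (forall s t X, 0 <= s -> 0 <= t -> state_space d X ->
     Phi (s + t) X = Phi t (Phi s X)) /\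
  (forall t X, 0 <= t -> state_space d X -> forall e : R, 0 < e ->
     exists2 del : R, 0 < del &
       forall s Y, 0 <= s -> state_space d Y -> `|s - t| < del -> pdist Y X < del ->
         pdist (Phi s Y) (Phi t X) < e) /\
  (forall Y, ftql_solution V theta Y ->
     forall t, 0 <= t -> forall X0 Xt : profile R d,
       (forall i, mirror (theta i) (Y 0 i) (X0 i)) ->
       (forall i, mirror (theta i) (Y t i) (Xt i)) ->
       Phi t X0 = Xt).

Definition lyapunov_stable (R : realType) (N : nat) (d : 'I_N -> nat)
  (Phi : R -> profile R d -> profile R d) (Xs : profile R d) : Prop :=
  forall U, nbhs_in Xs U -> exists2 U', nbhs_in Xs U' &
    forall t X, 0 <= t -> U' X -> U (Phi t X).

Definition consistency_domain (R : realType) (N : nat) (d : 'I_N -> nat)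
  (P : profile R d) : set (profile R d) :=
  [set X | state_space d X /\
     forall i (v : 'cV[complex R]_(d i)), X i *m v = 0 -> P i *m v = 0].

Definition converges_to (R : realType) (N : nat) (d : 'I_N -> nat)
  (x : R -> profile R d) (L : profile R d) : Prop :=
  forall e : R, 0 < e -> exists T : R, forall t, T <= t -> pdist (x t) L < e.

Definition consistently_attracting (R : realType) (N : nat) (d : 'I_N -> nat)
  (Phi : R -> profile R d -> profile R d) (P : profile R d) : Prop :=
  exists2 U, nbhs_in P U &
    forall X, U X -> consistency_domain P X -> converges_to (Phi ^~ X) P.

Definition consistently_asymptotically_stable (R : realType) (N : nat)
  (d : 'I_N -> nat) (Phi : R -> profile R d -> profile R d) (P : profile R d)
  : Prop :=
  lyapunov_stable Phi P /\ consistently_attracting Phi P.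

From mathcomp Require Import all_boot all_order all_algebra.
From mathcomp Require Import sesquilinear spectral complex.
From mathcomp Require Import all_classical all_reals all_analysis.
Import Order.TTheory GRing.Theory Num.Theory.
Local Open Scope classical_set_scope.
Local Open Scope ring_scope.

Set Implicit Arguments.
Unset Strict Implicit.
Unset Printing Implicit Defensive.

(* Fix e > 0.  By Lyapunov stability there is a radius del such that orbits
   starting del-close to X* stay e-close to X* forever.  Every L in a compact
   set K of interior points lies in the consistency domain of X*, so its orbit
   comes del/2-close to X* at some time T_L; by continuity of the flow, every
   state close enough to L is del-close to X* at time T_L, hence (semigroup
   property) e-close to X* at all later times.  A sequential-compactness
   argument merges these local entrance times into one time valid on all of K. *)

Lemma cmodD (R : realType) (x y : complex R) : cmod (x + y) <= cmod x + cmod y.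
Proof.
have cmod_normc (z : complex R) : cmod z = Normc.normc z by case: z.
by rewrite !cmod_normc; exact: le_normcD.
Qed.

Lemma bigmax_ge0 (R : realType) (n : nat) (F : 'I_n -> R) :
  (forall i, 0 <= F i) -> 0 <= \big[Num.max/0]_(i < n) F i.
Proof.
by move=> F_ge0; elim/big_ind: _ => // a b a0 b0; rewrite le_max a0.
Qed.

Section ProfileDistance.
Variables (R : realType) (N : nat) (d : 'I_N -> nat).
Implicit Types X Y Z : profile R d.

Lemma pdist_ge0 X Y : 0 <= pdist X Y.
Proof. do 3 apply: bigmax_ge0 => ?; exact: sqrtr_ge0. Qed.

Lemma pdist_entry X Y i a b : cmod (X i a b - Y i a b) <= pdist X Y.
Proof.
apply: le_trans (le_bigmax _ _ i); apply: le_trans (le_bigmax _ _ a).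
exact: (le_bigmax _ _ b).
Qed.

Lemma pdist_triangle X Y Z : pdist X Z <= pdist X Y + pdist Y Z.
Proof.
have sum_ge0 : 0 <= pdist X Y + pdist Y Z by rewrite addr_ge0 ?pdist_ge0.
apply: bigmax_le => // i _; apply: bigmax_le => // a _; apply: bigmax_le => // b _.
rewrite -[X i a b](subrK (Y i a b)) -addrA.
apply: le_trans (cmodD _ _) _.
by apply: lerD; apply: pdist_entry.
Qed.

End ProfileDistance.

Lemma increasing_nat_ge_id (phi : nat -> nat) :
  {homo phi : m n / (m < n)%N >-> (m < n)%N} -> forall n, (n <= phi n)%N.
Proof. by move=> phi_incr; elim=> // n IH; apply: leq_ltn_trans IH (phi_incr _ _ _). Qed.

(* Otherwise one could pick states X_n in K
   failing Q at times t_n >= n; a limit point L of the X_n then contradicts the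
   local hypothesis at L. *)
Lemma seq_compact_eventually (R : realType) (N : nat) (d : 'I_N -> nat)
    (K : set (profile R d)) (Q : R -> profile R d -> Prop) :
  seq_compact K ->
  (forall L, K L -> exists T : R, exists2 g : R, 0 < g &
     forall Y, K Y -> pdist Y L < g -> forall t, T <= t -> Q t Y) ->
  exists T : R, forall t, T <= t -> forall X, K X -> Q t X.
Proof.
move=> K_compact locally_Q; apply: contrapT => no_uniform_time.
have bad n : exists tX : R * profile R d,
    [/\ n%:R <= tX.1, K tX.2 & ~ Q tX.1 tX.2].
  apply: contrapT => no_bad; apply: no_uniform_time; exists n%:R => t tn X KX.
  by apply: contrapT => notQ; apply: no_bad; exists (t, X).
have [f f_bad] := choice bad.
have [phi [L [phi_incr [KL phi_conv]]]] :=
  K_compact (fun n => (f n).2) (fun n => let: And3 _ Kf _ := f_bad n in Kf).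
have [T [g g0 near_L]] := locally_Q L KL.
have [M near_after_M] := phi_conv g g0.
pose n := maxn M (Num.Def.archi_bound (Num.max T 0)).
have [tn Kfn notQ] := f_bad (phi n); apply: notQ.
apply: near_L => //; first by apply: near_after_M; rewrite leq_maxl.
have T_le_n : T <= n%:R.
  have T_le_max : T <= Num.max T 0 by rewrite le_max lexx.
  have max_ge0 : 0 <= Num.max T 0 by rewrite le_max lexx orbT.
  apply: le_trans T_le_max (ltW (lt_le_trans (archi_boundP max_ge0) _)).
  by rewrite ler_nat leq_maxr.
apply: le_trans T_le_n (le_trans _ tn).
by rewrite ler_nat increasing_nat_ge_id.
Qed.

Lemma relint_consistency_domain (R : realType) (N : nat) (d : 'I_N -> nat)
    (P X : profile R d) :
  relint_state d X -> consistency_domain P X.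
Proof.
move=> X_relint; split=> [i|i v Xv0]; first exact: (X_relint i).1.
have [->|v_neq0] := eqVneq v 0; first by rewrite mulmx0.
have := (X_relint i).2.2 v v_neq0.
by rewrite -mulmxA Xv0 mulmx0 mxE ltxx.
Qed.

Section StableFlow.
Variables (R : realType) (N : nat) (d : 'I_N -> nat).
Variables (Phi : R -> profile R d -> profile R d) (Xs : profile R d).

Hypothesis flow_invariant :
  forall t X, 0 <= t -> state_space d X -> state_space d (Phi t X).
Hypothesis flow_semigroup : forall s t X, 0 <= s -> 0 <= t -> state_space d X ->
  Phi (s + t) X = Phi t (Phi s X).
Hypothesis flow_continuous : forall t X, 0 <= t -> state_space d X ->
  forall e : R, 0 < e -> exists2 del : R, 0 < del &
    forall (s : R) Y, 0 <= s -> state_space d Y -> `|s - t| < del ->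
      pdist Y X < del -> pdist (Phi s Y) (Phi t X) < e.
Hypothesis Xs_stable : lyapunov_stable Phi Xs.

Lemma lyapunov_ball (e : R) : 0 < e -> exists2 del : R, 0 < del &
  forall Z, state_space d Z -> pdist Z Xs < del ->
    forall t, 0 <= t -> pdist (Phi t Z) Xs < e.
Proof.
move=> e0.
have e_ball : nbhs_in Xs (fun X => state_space d X /\ pdist X Xs < e).
  by split=> [X []//|]; exists e.
have [U' [_ [del del0 ball_in_U']] U'_stays] := Xs_stable e_ball.
exists del => // Z SZ Zdel t t0.
by case: (U'_stays t Z t0 (ball_in_U' Z SZ Zdel)).
Qed.

(* If the orbit of L converges to X*, then all states near L are e-close to X*
   from some common time on: at time T_L the orbit of L is deep inside the
   Lyapunov ball, nearby orbits follow it by continuity, and then stay. *)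
Lemma attracted_locally_eventually (L : profile R d) (e : R) :
  state_space d L -> converges_to (Phi ^~ L) Xs -> 0 < e ->
  exists T : R, exists2 g : R, 0 < g &
    forall Y, state_space d Y -> pdist Y L < g ->
      forall t, T <= t -> pdist (Phi t Y) Xs < e.
Proof.
move=> SL L_conv e0.
have [del del0 trapped] := lyapunov_ball e0.
have del2_gt0 : 0 < del / 2 by rewrite divr_gt0.
have [T0 L_close] := L_conv _ del2_gt0.
pose T := Num.max T0 0.
have T_ge0 : 0 <= T by rewrite le_max lexx orbT.
have [g g0 follows_L] := flow_continuous T_ge0 SL del2_gt0.
exists T, g => // Y SY YL t Tt.
have LT_close : pdist (Phi T L) Xs < del / 2 by apply: L_close; rewrite le_max lexx.
have YT_close : pdist (Phi T Y) Xs < del.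
  have YT_follows : pdist (Phi T Y) (Phi T L) < del / 2.
    by apply: follows_L; rewrite ?subrr ?normr0.
  apply: le_lt_trans (pdist_triangle _ (Phi T L) _) _.
  by rewrite (splitr del) ltrD.
have tT_ge0 : 0 <= t - T by rewrite subr_ge0.
rewrite -(subrKC T t) flow_semigroup //.
exact: trapped (flow_invariant T_ge0 SY) YT_close _ tT_ge0.
Qed.

End StableFlow.

(* Lemma D.2: take W to be the neighborhood on which X* is consistently
   attracting; on every compact neighborhood K of X* inside W and the relative
   interior, the flow converges to X* uniformly. *)
Theorem lemmaD2 (R : realType) (N : nat) (d : 'I_N -> nat) (Om : finType)
  (U : 'I_N -> Om -> R) (P : Om -> tens_op R d)
  (V : profile R d -> profile R d) (theta : 'I_N -> R -> R)
  (Phi : R -> profile R d -> profile R d) (Xs : profile R d) :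
  POVM P ->
  payoff_gradient U P V ->
  (forall i, regularizer_kernel (theta i)) ->
  ftql_flow V theta Phi ->
  relint_state d Xs ->
  consistently_asymptotically_stable Phi Xs ->
  exists2 W : set (profile R d), nbhs_in Xs W &
    forall K : set (profile R d),
      K `<=` W -> K `<=` relint_state d -> nbhs_in Xs K -> seq_compact K ->
      forall e : R, 0 < e -> exists T : R, forall t, T <= t ->
        forall X, K X -> pdist (Phi t X) Xs <= e.
Proof.
move=> _ _ _ [flow_inv [_ [flow_sg [flow_cont _]]]] _ [Xs_stable [W W_nbhs W_attracted]].
exists W => // K KW K_relint _ K_compact e e0.
have K_state X : K X -> state_space d X by move=> KX i; exact: (K_relint X KX i).1.
apply: (seq_compact_eventually (Q := fun t X => pdist (Phi t X) Xs <= e))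
  K_compact _ => L KL.
have L_conv : converges_to (Phi ^~ L) Xs.
  exact: W_attracted (KW L KL) (relint_consistency_domain Xs (K_relint L KL)).
have [T [g g0 near_L]] := attracted_locally_eventually flow_inv flow_sg flow_cont
  Xs_stable (K_state L KL) L_conv e0.
exists T, g => // Y KY YL t Tt.
exact/ltW/(near_L Y (K_state Y KY) YL t Tt).
Qed.
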